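(* Let $\kappa$ be a cumulant function with effective domain $\Theta$ satisfying Assumption (A1), let $v>0$, $\varphi>0$, $\theta\in\mathring\Theta$, $Y\sim\mathrm{EDF}(\theta,v,\varphi,\kappa)$ and $\delta\in(0,1)$. Define the random variables $$l^{\delta}(Y,v,\varphi,\kappa)=\inf\{\mu\in\kappa'(\mathring\Theta)\,:\,F^*(Y;h(\mu),v,\varphi,\kappa)\le 1-\delta\},$$ $$u^{\delta}(Y,v,\varphi,\kappa)=\sup\{\mu\in\kappa'(\mathring\Theta)\,:\,F(Y;h(\mu),v,\varphi,\kappa)\ge \delta\}.$$ Then $\mathbb P(\mathbb E[Y]\ge l^{\delta}(Y,v,\varphi,\kappa))\ge 1-\delta$ and $\mathbb P(\mathbb E[Y]\le u^{\delta}(Y,v,\varphi,\kappa))\ge 1-\delta$.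
   Context: A real random variable $Y$ follows $\mathrm{EDF}(\theta,v,\varphi,\kappa)$ if it has density $f(y)=\exp\{(y\theta-\kappa(\theta))/(\varphi/v)+a(y;v/\varphi)\}$ with respect to a $\sigma$-finite measure $\nu$ on $\mathbb R$ not depending on $\theta$; $\theta\in\Theta$ is the canonical parameter, $\Theta$ the effective domain, $\kappa$ the cumulant function, $v>0$ the volume, $\varphi>0$ the dispersion parameter, $a$ a normalizing function. Assumption (A1): $\Theta$ has non-empty interior $\mathring{\Theta}$ and $\nu$ is not a single point mass. Then $\kappa$ is strictly convex and smooth on $\mathring\Theta$, $\mathbb E[Y]=\kappa'(\theta)$, $\kappa'(\mathring\Theta)$ is the mean parameter space and $h=(\kappa')^{-1}$ the canonical link. For $\mu\in\kappa'(\mathring\Theta)$ and $y\in\mathbb R$, $F(y;h(\mu),v,\varphi,\kappa)=\mathbb P(W\le y)$ and $F^*(y;h(\mu),v,\varphi,\kappa)=\mathbb P(W<y)$ where $W\sim\mathrm{EDF}(h(\mu),v,\varphi,\kappa)$. *)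

From HB Require Import structures.
From mathcomp Require Import all_boot all_order all_algebra.
From mathcomp Require Import all_classical all_reals all_analysis.
Set Implicit Arguments. Unset Strict Implicit. Unset Printing Implicit Defensive.
Import Order.TTheory GRing.Theory Num.Theory.
Import numFieldNormedType.Exports.
Local Open Scope classical_set_scope.
Local Open Scope ring_scope.

(* Exponential dispersion family EDF(theta, v, phi, kappa) on the real line,
   with respect to a fixed sigma-finite (Borel) measure nu on R and a
   normalizing function a(. ; v/phi), here written a : R -> R for the fixed
   weight v/phi. *)

Section EDF.
Variable R : realType.

Definition edf_density (kappa : R -> R) (v phi : R) (a : R -> R)
  (theta : R) (y : R) : R :=
  expR ((y * theta - kappa theta) / (phi / v) + a y).

Definition edf_cdf (nu : {measure set R -> \bar R}) (kappa : R -> R)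
  (v phi : R) (a : R -> R) (theta y : R) : \bar R :=
  (\int[nu]_(x in `]-oo, y]) (edf_density kappa v phi a theta x)%:E)%E.

Definition edf_cdf_strict (nu : {measure set R -> \bar R}) (kappa : R -> R)
  (v phi : R) (a : R -> R) (theta y : R) : \bar R :=
  (\int[nu]_(x in `]-oo, y[) (edf_density kappa v phi a theta x)%:E)%E.

Definition mean_space (kappa : R -> R) (Theta : set R) : set R :=
  (derive1 kappa) @` (interior Theta).

Definition canon_link (kappa : R -> R) (Theta : set R) (mu : R) : R :=
  xget 0 [set t | interior Theta t /\ derive1 kappa t = mu].

(* l^delta(y, v, phi, kappa) = inf{mu in kappa'(Theta°) : F^*(y; h(mu)) <= 1 - delta},
   as an extended real (inf of the empty set is +oo). *)
Definition edf_lower (nu : {measure set R -> \bar R}) (kappa : R -> R)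
  (Theta : set R) (v phi : R) (a : R -> R) (delta y : R) : \bar R :=
  ereal_inf [set mu%:E | mu in [set mu | mean_space kappa Theta mu /\
     (edf_cdf_strict nu kappa v phi a (canon_link kappa Theta mu) y
        <= (1 - delta)%:E)%E]].

(* u^delta(y, v, phi, kappa) = sup{mu in kappa'(Theta°) : F(y; h(mu)) >= delta},
   as an extended real (sup of the empty set is -oo). *)
Definition edf_upper (nu : {measure set R -> \bar R}) (kappa : R -> R)
  (Theta : set R) (v phi : R) (a : R -> R) (delta y : R) : \bar R :=
  ereal_sup [set mu%:E | mu in [set mu | mean_space kappa Theta mu /\
     (delta%:E <= edf_cdf nu kappa v phi a (canon_link kappa Theta mu) y)%E]].

End EDF.

(* With c = phi / v, the cumulant function is fixed by
   int exp(y t / c + a y) d nu(y) = exp(kappa(t) / c).  Differentiating under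
   the integral sign shows that kappa'(t) is the mean m(t) of EDF(t), and m is
   strictly increasing: for t1 < t2 and m = m(t1), the integrand
   (y - m) (exp(y (t2 - t1) / c) - exp(m (t2 - t1) / c)) exp(y t1 / c + a y)
   is positive off the point m, which nu does not carry alone by (A1), and its
   integral is proportional to m(t2) - m(t1).  Hence h(kappa'(theta)) = theta, so
   {l(Y) <= kappa'(theta)} contains {F*(Y; theta) <= 1 - delta} and
   {kappa'(theta) <= u(Y)} contains {F(Y; theta) >= delta}.  For any law P on
   the line, {y | P(]-oo, y[) <= 1 - delta} is a half-line ending at some b, and
   the one-sided continuity of P(]-oo, .]) at b gives it mass >= 1 - delta;
   dually for {y | P(]-oo, y]) >= delta}. *)

From HB Require Import structures.
From mathcomp Require Import all_boot all_order all_algebra.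
From mathcomp Require Import all_classical all_reals all_analysis.
From mathcomp Require Import measurable_realfun.
From mathcomp Require Import ring lra.
Set Implicit Arguments. Unset Strict Implicit. Unset Printing Implicit Defensive.
Import Order.TTheory GRing.Theory Num.Theory.
Import numFieldNormedType.Exports.
Local Open Scope classical_set_scope.
Local Open Scope ring_scope.

(* The proof arguments only serve to key the measure instance below. *)
Definition density_measure d (T : measurableType d) (R : realType)
    (mu : {measure set T -> \bar R}) (f : T -> \bar R)
    (mf : measurable_fun setT f) (f_ge0 : forall x, (0 <= f x)%E) :=
  fun A => (\int[mu]_(x in A) f x)%E.

Section density_measure.
Context d (T : measurableType d) (R : realType) (mu : {measure set T -> \bar R})
  (f : T -> \bar R) (mf : measurable_fun setT f) (f_ge0 : forall x, (0 <= f x)%E).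
Local Notation P := (density_measure mu mf f_ge0).

Let P0 : P set0 = 0%E. Proof. exact: integral_set0. Qed.

Let P_ge0 A : (0 <= P A)%E. Proof. exact: integral_ge0. Qed.

Let P_sigma_additive : semi_sigma_additive P.
Proof. exact: semi_sigma_additive_nng_induced. Qed.

HB.instance Definition _ := isMeasure.Build _ _ _ P P0 P_ge0 P_sigma_additive.

End density_measure.

Lemma ge0_le_integral_subset d (T : measurableType d) (R : realType)
    (mu : {measure set T -> \bar R}) (f : T -> \bar R) (A B : set T) :
  (forall x, B x -> (0 <= f x)%E) -> A `<=` B ->
  (\int[mu]_(x in A) f x <= \int[mu]_(x in B) f x)%E.
Proof.
move=> f0 AB; rewrite !ge0_integralE //; last by move=> x /AB; exact: f0.
apply: le_ereal_sup => _ [h /= hf <-]; exists h => //= x.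
apply: (le_trans (hf x)); rewrite /patch.
case: ifPn => [/set_mem/AB/mem_set -> //|_].
by case: ifPn => [/set_mem/f0 //|].
Qed.

Section real_integrable.
Context {d} {T : measurableType d} {R : realType} {mu : {measure set T -> \bar R}}.
Context {D : set T} (mD : measurable D).

Lemma integrableZl_EFin (k : R) (f : T -> R) : mu.-integrable D (EFin \o f) ->
  mu.-integrable D (EFin \o (fun x => k * f x)).
Proof.
move=> intf; apply: eq_integrable mD _ _ _ (integrableZl mD k intf).
by move=> x _; rewrite /= EFinM.
Qed.

Lemma integrableD_EFin (f g : T -> R) : mu.-integrable D (EFin \o f) ->
  mu.-integrable D (EFin \o g) -> mu.-integrable D (EFin \o (fun x => f x + g x)).
Proof. by move=> intf intg; exact: eq_integrable mD _ _ _ (integrableD mD intf intg). Qed.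

Lemma integrableB_EFin (f g : T -> R) : mu.-integrable D (EFin \o f) ->
  mu.-integrable D (EFin \o g) -> mu.-integrable D (EFin \o (fun x => f x - g x)).
Proof. by move=> intf intg; exact: eq_integrable mD _ _ _ (integrableB mD intf intg). Qed.

End real_integrable.

Lemma Rintegral_gt0 d (T : measurableType d) (R : realType)
    (mu : {measure set T -> \bar R}) (A : set T) (f : T -> R) :
  measurable A -> mu A != 0%E -> mu.-integrable setT (EFin \o f) ->
  (forall x, 0 <= f x) -> (forall x, A x -> 0 < f x) ->
  0 < \int[mu]_x f x.
Proof.
move=> mA muA0 intf f_ge0 f_gt0.
rewrite lt_neqAle Rintegral_ge0 ?andbT //; apply/eqP => int0.
have mf := measurable_int _ intf.
have abs0 : (\int[mu]_x `|(EFin \o f) x|)%E = 0%E.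
  under eq_integral do rewrite /= ger0_norm //.
  rewrite -[LHS]fineK; last by apply: integrable_fin_num.
  by move: int0; rewrite /Rintegral => <-.
have [N [mN N0 fN]] := (ae_eq_integral_abs _ measurableT mf).1 abs0.
move/negP: muA0; apply; rewrite -measure_le0 -N0 le_measure ?inE //.
by move=> x Ax; apply: fN => /(_ I) /=; apply/eqP; rewrite eqe gt_eqF // f_gt0.
Qed.

Lemma abs_mul_expR_le (R : realType) (s t th e : R) :
  0 < e -> th - e < t -> t < th + e ->
  `|s| * expR (s * t) <= e^-1 * (expR (s * (th - 2 * e)) + expR (s * (th + 2 * e))).
Proof.
move=> e0 the tthe.
have abs_le : `|s| <= e^-1 * expR (`|s| * e).
  rewrite -(ler_pM2l e0) mulrA mulfV ?gt_eqF // mul1r mulrC.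
  by apply: le_trans (expR_ge1Dx _); rewrite lerDr.
apply: (le_trans (ler_wpM2r (expR_ge0 _) abs_le)).
rewrite -mulrA -expRD; apply: ler_wpM2l; first by rewrite invr_ge0 ltW.
have [s0|s0] := leP 0 s.
  rewrite ger0_norm // -[leLHS]add0r; apply: lerD; first exact: expR_ge0.
  by rewrite ler_expR; nra.
rewrite ltr0_norm // -[leLHS]addr0; apply: lerD; last exact: expR_ge0.
by rewrite ler_expR; nra.
Qed.

Lemma subr_mul_expR_gt0 (R : realType) (d m y : R) : 0 < d -> y != m ->
  0 < (y - m) * (expR (y * d) - expR (m * d)).
Proof.
move=> d_gt0; case: (ltgtP y m) => // [ym|my] _.
- by rewrite -mulrNN mulr_gt0 // oppr_gt0 subr_lt0 // ltr_expR ltr_pM2r.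
- by rewrite mulr_gt0 // subr_gt0 // ltr_expR ltr_pM2r.
Qed.

Lemma measurable_downset {R : realType} (D : set R) :
  (forall x y, y <= x -> D x -> D y) -> measurable D.
Proof.
move=> downD; apply: is_interval_measurable => x y _ Dy z /andP[_ zy].
exact: downD zy Dy.
Qed.

Section distribution_function.
Context {R : realType} (P : {measure set R -> \bar R}).
Hypothesis P_setT : P setT = 1%E.
Local Open Scope ereal_scope.

Let P_lty A : measurable A -> P A < +oo.
Proof.
by move=> mA; apply: le_lt_trans (ltry 1%R); rewrite -P_setT le_measure ?inE.
Qed.

Lemma cvg_measure_itvNy_nat : P `]-oo, n%:R]%classic @[n --> \oo] --> 1.
Proof.
rewrite -P_setT; have <- : \bigcup_n `]-oo, n%:R]%classic = [set: R].
  rewrite -subTset => x _; exists (Num.truncn x).+1 => //=.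
  by rewrite in_itv /= ltW // truncnS_gt.
apply: nondecreasing_cvg_mu => //; first exact: bigcup_measurable.
move=> m n mn; apply/subsetPset => x /=; rewrite !in_itv /= => /le_trans; apply.
by rewrite ler_nat.
Qed.

Lemma cvg_measure_itvNy_Nnat : P `]-oo, (- n%:R)%R[%classic @[n --> \oo] --> 0.
Proof.
rewrite -(measure0 P); have <- : \bigcap_n `]-oo, (- n%:R)%R[%classic = set0 :> set R.
  rewrite -subset0 => x /(_ (Num.truncn (- x)).+1 I) /=.
  by rewrite in_itv /= ltrNr => /lt_trans/(_ (truncnS_gt _)); rewrite ltxx.
apply: nonincreasing_cvg_mu => //; [exact: P_lty | exact: bigcap_measurable |].
move=> m n mn; apply/subsetPset => x /=; rewrite !in_itv /= => /lt_le_trans; apply.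
by rewrite lerN2 ler_nat.
Qed.

Lemma cvg_measure_itvNyc_right (b : R) :
  P `]-oo, (b + n.+1%:R^-1)%R[%classic @[n --> \oo] --> P `]-oo, b]%classic.
Proof.
rewrite (itvNycEbigcap true b).
apply: nonincreasing_cvg_mu => //; [exact: P_lty | exact: bigcap_measurable |].
move=> m n mn; apply/subsetPset; apply: subset_itvl.
by rewrite bnd_simp lerD2l lef_pV2 ?posrE // ler_nat.
Qed.

Lemma cvg_measure_itvNyo_left (b : R) :
  P `]-oo, (b - n.+1%:R^-1)%R]%classic @[n --> \oo] --> P `]-oo, b[%classic.
Proof.
have -> : `]-oo, b[%classic = \bigcup_n `]-oo, (b - n.+1%:R^-1)%R]%classic.
  apply/seteqP; split => x /=; rewrite in_itv /=.
    by move=> /ltr_add_invr[k xk]; exists k => //=; rewrite in_itv /= lerBrDr ltW.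
  move=> [n _]; rewrite /= in_itv /= => /le_lt_trans; apply.
  by rewrite gtrBl invr_gt0.
apply: nondecreasing_cvg_mu => //; first exact: bigcup_measurable.
move=> m n mn; apply/subsetPset; apply: subset_itvl.
by rewrite bnd_simp lerD2l lerN2 lef_pV2 ?posrE // ler_nat.
Qed.

Let le_measure_itvNy b (x y : R) : (y <= x)%R ->
  P [set` Interval -oo%O (BSide b y)] <= P [set` Interval -oo%O (BSide b x)].
Proof. by move=> yx; rewrite le_measure ?inE //; apply: subitvPr; rewrite bnd_simp. Qed.

Lemma measure_cdf_lt_le (d : R) : (0 <= d)%R -> (d < 1)%R ->
  P [set y | P `]-oo, y]%classic < d%:E] <= d%:E.
Proof.
move=> d0 d1; set D := [set y | _].
have downD x y : (y <= x)%R -> D x -> D y.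
  by move=> /(le_measure_itvNy false); apply: le_lt_trans.
have mD := measurable_downset downD.
have [[y0 Dy0]|D0] := pselect (D !=set0); last first.
  rewrite (_ : D = set0) ?measure0 ?lee_fin //.
  by apply/seteqP; split => // y Dy; apply: D0; exists y.
have [n Dn] : exists n : nat, ~ D n%:R.
  apply/existsNP => allD; move: d1; apply/negP; rewrite -leNgt -lee_fin.
  apply: (cvge_le _ cvg_measure_itvNy_nat); apply: nearW => n.
  exact/ltW/allD.
have supD : has_sup D.
  split; first by exists y0.
  exists n%:R => y Dy; rewrite leNgt; apply/negP => /ltW ny.
  exact: Dn (downD _ _ ny Dy).
have ubD := sup_upper_bound supD.
have [Db|Db] := pselect (D (sup D)).
  apply: (@le_trans _ _ (P `]-oo, sup D]%classic)); last exact: ltW.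
  by rewrite le_measure ?inE // => y /ubD; rewrite /= in_itv.
apply: (@le_trans _ _ (P `]-oo, sup D[%classic)).
  rewrite le_measure ?inE // => y Dy /=; rewrite in_itv /= lt_neqAle ubD // andbT.
  by apply: contraPneq Db => <-.
apply: (cvge_le _ (@cvg_measure_itvNyo_left (sup D))); apply: nearW => k; apply/ltW.
have /sup_adherent/(_ supD)[y Dy /ltW ley] : (0 < k.+1%:R^-1 :> R)%R.
  by rewrite invr_gt0.
exact: downD ley Dy.
Qed.

Lemma measure_cdf_ge (d : R) : (0 <= d)%R -> (d < 1)%R ->
  (1 - d)%:E <= P [set y | d%:E <= P `]-oo, y]%classic].
Proof.
move=> d0 d1; set D := [set y | P `]-oo, y]%classic < d%:E].
have mD : measurable D.
  by apply: measurable_downset => x y /(le_measure_itvNy false); apply: le_lt_trans.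
have -> : [set y | d%:E <= P `]-oo, y]%classic] = ~` D.
  by apply/seteqP; split => y /=; rewrite leNgt => /negP.
rewrite -setTD measureD ?setTI ?P_lty // EFinB.
by apply: leeB; [rewrite -P_setT | exact: measure_cdf_lt_le].
Qed.

Lemma measure_cdf_strict_le (e : R) : (0 < e)%R -> (e <= 1)%R ->
  e%:E <= P [set y | P `]-oo, y[%classic <= e%:E].
Proof.
move=> e0 e1; set S := [set y | _].
have downS x y : (y <= x)%R -> S x -> S y.
  by move=> /(le_measure_itvNy true); apply: le_trans.
have mS := measurable_downset downS.
have [[y0 Sy0]|S0] := pselect (~` S !=set0); last first.
  rewrite (_ : S = setT) ?P_setT ?lee_fin //.
  by apply/seteqP; split => // y _; apply: contrapT => Sy; apply: S0; exists y.
have [n Sn] : exists n : nat, S (- n%:R)%R.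
  apply: contrapT => /forallNP allS; move: e0; apply/negP; rewrite -leNgt -lee_fin.
  apply: (cvge_ge _ cvg_measure_itvNy_Nnat); apply: nearW => n.
  by move/negP: (allS n); rewrite -ltNge => /ltW.
have infS : has_inf (~` S).
  split; first by exists y0.
  exists (- n%:R)%R => y Sy; rewrite leNgt; apply/negP => /ltW yn.
  exact: Sy (downS _ _ yn Sn).
have lbS := ge_inf (proj2 infS).
have ltS : `]-oo, inf (~` S)[%classic `<=` S.
  move=> y /=; rewrite in_itv /= => yb; apply: contrapT => Sy.
  by have := lbS _ Sy; rewrite leNgt yb.
have [Sb|Sb] := pselect (S (inf (~` S))).
  apply: (@le_trans _ _ (P `]-oo, inf (~` S)]%classic)); last first.
    rewrite le_measure ?inE // => y /=; rewrite in_itv /= le_eqVlt.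
    by case/predU1P => [->//|]; exact: ltS.
  apply: (cvge_ge _ (@cvg_measure_itvNyc_right (inf (~` S)))); apply: nearW => k.
  have /inf_adherent/(_ infS)[y Sy /ltW ley] : (0 < k.+1%:R^-1 :> R)%R.
    by rewrite invr_gt0.
  move/negP: Sy; rewrite -ltNge => /ltW/le_trans; apply.
  exact: le_measure_itvNy.
apply: (@le_trans _ _ (P `]-oo, inf (~` S)[%classic)).
  by move/negP: Sb; rewrite -ltNge => /ltW.
by rewrite le_measure ?inE.
Qed.

End distribution_function.

Section edf_weight.
Context {R : realType} (nu : {measure set R -> \bar R}) (a : R -> R) (c : R).

Definition edf_weight t y := expR (y * t / c + a y).

Definition edf_mass t := (\int[nu]_y edf_weight t y)%R.

Definition edf_moment t := (\int[nu]_y (y * edf_weight t y))%R.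

Definition edf_mean t := edf_moment t / edf_mass t.

Hypothesis measurable_a : measurable_fun setT a.
Hypothesis c_neq0 : c != 0.

Lemma measurable_edf_weight t : measurable_fun setT (edf_weight t).
Proof.
apply: measurableT_comp => //; apply: measurable_funD => //.
by do 2 apply: measurable_funM => //.
Qed.

Lemma is_derive_edf_weight x y :
  is_derive x (1 : R) (edf_weight ^~ y) (edf_weight x y * (y / c)).
Proof.
have lin : is_derive x (1 : R) (fun s => y / c * s + a y) (y / c).
  have [? D1] := is_deriveD (is_deriveZ (y / c) (is_derive_id x (1 : R)))
    (is_derive_cst (a y) x (1 : R)).
  by split => //; rewrite -[RHS]mulr1 -[RHS]addr0.
have := is_derive1_comp (is_derive_expR _) lin.
have -> : expR \o (fun s => y / c * s + a y) = edf_weight ^~ y.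
  by apply/funext => s; rewrite /edf_weight /= mulrAC mulrC.
by rewrite /edf_weight /= (mulrAC y c^-1 x).
Qed.

Lemma partial1_edf_weight x y :
  partial1of2 edf_weight x y = edf_weight x y * (y / c).
Proof. by rewrite partial1of2E; case: (is_derive_edf_weight x y). Qed.

Section differentiation_under_integral.
Variables (th e : R).
Hypothesis e_gt0 : 0 < e.
Hypothesis integrable_near : forall t, th - 2 * e <= t <= th + 2 * e ->
  nu.-integrable setT (EFin \o edf_weight t).

Local Notation U := `]th - e, th + e[%classic.

Let U_th : U th.
Proof. by have e0 := e_gt0; rewrite /= in_itv /=; apply/andP; split; lra. Qed.

Let integrable_U x : U x -> nu.-integrable setT (EFin \o edf_weight x).
Proof.
have e0 := e_gt0; rewrite /= in_itv /= => /andP[? ?].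
by apply: integrable_near; apply/andP; split; lra.
Qed.

Let G y := e^-1 * (edf_weight (th - 2 * e) y + edf_weight (th + 2 * e) y).

Let G_ge0 y : 0 <= G y.
Proof. by rewrite /G mulr_ge0 ?invr_ge0 ?addr_ge0 ?expR_ge0 ?ltW. Qed.

Let integrable_G : nu.-integrable setT (EFin \o G).
Proof.
have e0 := e_gt0.
apply: (integrableZl_EFin measurableT); apply: (integrableD_EFin measurableT);
  by apply: integrable_near; apply/andP; split; lra.
Qed.

Let partial1_edf_weight_le x y : U x -> setT y ->
  `|partial1of2 edf_weight x y| <= G y.
Proof.
rewrite /= in_itv /= => /andP[x_gt x_lt] _.
have split_weight t : edf_weight t y = expR (y / c * t) * expR (a y).
  by rewrite /edf_weight -expRD mulrAC.
rewrite partial1_edf_weight /G !split_weight normrM ger0_norm ?expR_ge0 //.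
rewrite mulrC mulrA -!mulrDl mulrA ler_wpM2r ?expR_ge0 //.
exact: abs_mul_expR_le.
Qed.

Lemma integrable_edf_moment :
  nu.-integrable setT (EFin \o (fun y => y * edf_weight th y)).
Proof.
apply: (le_integrable measurableT _ _ (integrableZl_EFin measurableT `|c| integrable_G)).
  apply/measurable_EFinP; apply: measurable_funM => //.
  exact: measurable_edf_weight.
move=> y Ty /=; rewrite lee_fin (ger0_norm (mulr_ge0 (normr_ge0 c) (G_ge0 y))).
have -> : y * edf_weight th y = c * (edf_weight th y * (y / c)) by field.
rewrite normrM -partial1_edf_weight; apply: ler_wpM2l => //.
exact: partial1_edf_weight_le.
Qed.

Let derivable_edf_weight x y : U x -> setT y -> derivable (edf_weight ^~ y) x 1.
Proof. by move=> _ _; case: (is_derive_edf_weight x y). Qed.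

Lemma derivable_edf_mass : derivable edf_mass th 1.
Proof.
exact: (derivable_under_integral measurableT U_th integrable_U derivable_edf_weight
  G_ge0 integrable_G partial1_edf_weight_le).
Qed.

Lemma derive1_edf_mass : derive1 edf_mass th = edf_moment th / c.
Proof.
rewrite (differentiation_under_integral measurableT U_th integrable_U
  derivable_edf_weight G_ge0 integrable_G partial1_edf_weight_le).
rewrite /edf_moment -RintegralZr //; last exact: integrable_edf_moment.
by apply: eq_Rintegral => y _; rewrite partial1_edf_weight mulrCA mulrA.
Qed.

End differentiation_under_integral.

End edf_weight.

Section exponential_dispersion_family.
Context {R : realType} (nu : {measure set R -> \bar R}) (a kappa : R -> R)
  (Theta : set R) (v phi : R).
Hypothesis measurable_a : measurable_fun setT a.
Hypotheses (v_gt0 : 0 < v) (phi_gt0 : 0 < phi).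
Hypothesis Theta_def :
  Theta = [set t | (\int[nu]_x (expR (x * t / (phi / v) + a x))%:E < +oo)%E].
Hypothesis edf_density_normed : forall t, Theta t ->
  (\int[nu]_x (edf_density kappa v phi a t x)%:E)%E = 1%E.

Local Notation c := (phi / v).
Local Notation w := (edf_weight a c).
Local Notation mass := (edf_mass nu a c).
Local Notation moment := (edf_moment nu a c).
Local Notation mean := (edf_mean nu a c).

Let c_gt0 : 0 < c. Proof. by rewrite divr_gt0. Qed.

Let integrable_weight t : Theta t -> nu.-integrable setT (EFin \o w t).
Proof.
rewrite Theta_def => Theta_t; apply/integrableP; split.
  by apply/measurable_EFinP; exact: measurable_edf_weight.
under eq_integral do rewrite /= ger0_norm ?expR_ge0 //.
exact: Theta_t.
Qed.

Let integrable_weight_near th : interior Theta th -> exists2 e, 0 < e &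
  forall t : R, th - 2 * e <= t <= th + 2 * e -> nu.-integrable setT (EFin \o w t).
Proof.
move=> /nbhs_ballP[r /= r_gt0 ball_Theta]; exists (r / 4); first by rewrite divr_gt0.
move=> t /andP[? ?]; apply/integrable_weight/ball_Theta.
by rewrite /ball /= ltr_norml; apply/andP; split; lra.
Qed.

Let integrable_moment th : interior Theta th ->
  nu.-integrable setT (EFin \o (fun y => y * w th y)).
Proof.
move=> /integrable_weight_near[e e_gt0 near_th].
by apply: (integrable_edf_moment measurable_a _ e_gt0 near_th); rewrite gt_eqF.
Qed.

Lemma edf_densityE t y :
  edf_density kappa v phi a t y = expR (- kappa t / c) * w t y.
Proof. by rewrite /edf_density /edf_weight -expRD; congr expR; ring. Qed.

Lemma edf_massE t : Theta t -> mass t = expR (kappa t / c).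
Proof.
move=> Theta_t.
have : (\int[nu]_y (expR (- kappa t / c) * w t y))%R = 1.
  rewrite /Rintegral; under eq_integral do rewrite -edf_densityE.
  by rewrite edf_density_normed.
rewrite RintegralZl //; last exact: integrable_weight.
have expR_neq0 : expR (kappa t / c) != 0 by rewrite gt_eqF ?expR_gt0.
rewrite mulNr expRN => mass1; apply: (mulfI (invr_neq0 expR_neq0)).
by rewrite mass1 mulVf.
Qed.

Lemma edf_mass_gt0 t : Theta t -> 0 < mass t.
Proof. by move=> /edf_massE ->; exact: expR_gt0. Qed.

Lemma kappaE t : Theta t -> kappa t = c * ln (mass t).
Proof. by move=> /edf_massE ->; rewrite expRK mulrC divfK ?gt_eqF. Qed.

Lemma derive1_kappa th : interior Theta th -> derive1 kappa th = mean th.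
Proof.
move=> th_int; have th_Theta : Theta th by exact: nbhs_singleton.
have [e e_gt0 near_th] := integrable_weight_near th_int.
have c_neq0 : c != 0 by rewrite gt_eqF.
have kappa_near : \forall t \near th, kappa t = c * ln (mass t).
  by near=> t; apply: kappaE; near: t; exact: th_int.
rewrite derive1E (near_eq_derive _ kappa_near).
have /derivableP mass_derive := derivable_edf_mass e_gt0 near_th.
have [_ ->] := is_deriveZ c (is_derive1_comp (is_derive1_ln (edf_mass_gt0 th_Theta)) mass_derive).
rewrite -derive1E (derive1_edf_mass measurable_a c_neq0 e_gt0 near_th) /edf_mean.
have mass_neq0 : mass th != 0 by rewrite gt_eqF ?edf_mass_gt0.
by rewrite -[LHS]/(c * _); field; rewrite mass_neq0 !gt_eqF.
Unshelve. all: by end_near.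
Qed.

Let integrable_centered t m : interior Theta t ->
  nu.-integrable setT (EFin \o (fun y => (y - m) * w t y)).
Proof.
move=> t_int; have t_Theta : Theta t by exact: nbhs_singleton.
apply: eq_integrable measurableT _ _ _ (integrableB_EFin measurableT
  (integrable_moment t_int) (integrableZl_EFin measurableT m (integrable_weight t_Theta))).
by move=> y _; rewrite /= mulrBl.
Qed.

Let Rintegral_centered t m : interior Theta t ->
  (\int[nu]_y ((y - m) * w t y))%R = moment t - m * mass t.
Proof.
move=> t_int; have t_Theta : Theta t by exact: nbhs_singleton.
under eq_Rintegral do rewrite mulrBl.
rewrite RintegralB //; first by rewrite RintegralZl //; exact: integrable_weight.
- exact: integrable_moment.
- exact: integrableZl_EFin (integrable_weight t_Theta).
Qed.

Hypothesis nu_not_point : forall z, nu (~` [set z]) != 0%E.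

Lemma edf_mean_lt t1 t2 : interior Theta t1 -> interior Theta t2 -> t1 < t2 ->
  mean t1 < mean t2.
Proof.
move=> t1_int t2_int t12.
have t1_Theta : Theta t1 by exact: nbhs_singleton.
have t2_Theta : Theta t2 by exact: nbhs_singleton.
set m := mean t1; set d := (t2 - t1) / c; set q := expR (m * d).
have d_gt0 : 0 < d by rewrite divr_gt0 // subr_gt0.
pose k y := (y - m) * w t2 y - q * ((y - m) * w t1 y).
have w_shift y : w t2 y = w t1 y * expR (y * d).
  by rewrite /edf_weight -expRD /d; congr expR; field; rewrite !gt_eqF.
have kE y : k y = (y - m) * (expR (y * d) - expR (m * d)) * w t1 y.
  by rewrite /k w_shift /q; ring.
have int_k : (\int[nu]_y k y)%R = moment t2 - m * mass t2.
  rewrite RintegralB //; last 2 first.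
  - exact: integrable_centered.
  - exact: integrableZl_EFin (integrable_centered _ t1_int).
  rewrite RintegralZl ?Rintegral_centered //; last exact: integrable_centered.
  by rewrite /m /edf_mean divfK ?subrr ?mulr0 ?subr0 // gt_eqF ?edf_mass_gt0.
have : 0 < (\int[nu]_y k y)%R.
  apply: (@Rintegral_gt0 _ _ _ _ (~` [set m])) => //.
  - exact: measurableC.
  - apply: integrableB_EFin => //; first exact: integrable_centered.
    exact: integrableZl_EFin (integrable_centered _ t1_int).
  - move=> y; rewrite kE; have [->|ym] := eqVneq y m; first by rewrite subrr !mul0r.
    by rewrite mulr_ge0 ?expR_ge0 // ltW // subr_mul_expR_gt0.
  - by move=> y /eqP ym; rewrite kE mulr_gt0 ?expR_gt0 // subr_mul_expR_gt0.
by rewrite int_k subr_gt0 /edf_mean ltr_pdivlMr ?edf_mass_gt0.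
Qed.

Lemma edf_mean_inj t1 t2 : interior Theta t1 -> interior Theta t2 ->
  mean t1 = mean t2 -> t1 = t2.
Proof.
move=> t1_int t2_int mean_eq.
have [/(edf_mean_lt t1_int t2_int)|/(edf_mean_lt t2_int t1_int)|//] := ltgtP t1 t2;
  by rewrite mean_eq ltxx.
Qed.

Lemma canon_link_derive1 th : interior Theta th ->
  canon_link kappa Theta (derive1 kappa th) = th.
Proof.
move=> th_int; rewrite /canon_link.
have : [set t | interior Theta t /\ derive1 kappa t = derive1 kappa th]
    (xget 0 [set t | interior Theta t /\ derive1 kappa t = derive1 kappa th]).
  by apply: xgetPex; exists th.
set t := xget _ _ => -[t_int t_eq].
by apply: edf_mean_inj; rewrite // -!derive1_kappa.
Qed.

Let measurable_density th :
  measurable_fun setT (EFin \o edf_density kappa v phi a th).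
Proof.
apply/measurable_EFinP; rewrite (funext (edf_densityE th)).
by apply: measurable_funM => //; exact: measurable_edf_weight.
Qed.

Let density_ge0 th y : (0 <= (EFin \o edf_density kappa v phi a th) y)%E.
Proof. by rewrite lee_fin expR_ge0. Qed.

Let law th := density_measure nu (measurable_density th) (density_ge0 th).

Lemma edf_lower_coverage th delta : interior Theta th -> 0 < delta < 1 ->
  ((1 - delta)%:E <=
     \int[nu]_(y in [set y | edf_lower nu kappa Theta v phi a delta y
                              <= (derive1 kappa th)%:E])
        (edf_density kappa v phi a th y)%:E)%E.
Proof.
move=> th_int /andP[d_gt0 d_lt1].
have law1 : law th setT = 1%E by apply: edf_density_normed; exact: nbhs_singleton.
apply: le_trans (measure_cdf_strict_le law1 _ _) _.
- by rewrite subr_gt0.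
- by rewrite lerBlDr lerDl ltW.
apply: ge0_le_integral_subset => [y _|y /= F_le]; first exact: density_ge0.
apply: ereal_inf_lbound; exists (derive1 kappa th) => //.
by split; [exists th | rewrite canon_link_derive1].
Qed.

Lemma edf_upper_coverage th delta : interior Theta th -> 0 < delta < 1 ->
  ((1 - delta)%:E <=
     \int[nu]_(y in [set y | (derive1 kappa th)%:E
                              <= edf_upper nu kappa Theta v phi a delta y])
        (edf_density kappa v phi a th y)%:E)%E.
Proof.
move=> th_int /andP[d_gt0 d_lt1].
have law1 : law th setT = 1%E by apply: edf_density_normed; exact: nbhs_singleton.
apply: le_trans (measure_cdf_ge law1 (ltW d_gt0) d_lt1) _.
apply: ge0_le_integral_subset => [y _|y /= F_ge]; first exact: density_ge0.
apply: ereal_sup_ubound; exists (derive1 kappa th) => //.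
by split; [exists th | rewrite canon_link_derive1].
Qed.

End exponential_dispersion_family.

Unset Implicit Arguments.

Theorem proposition3p5 (R : realType) (nu : {measure set R -> \bar R})
  (a : R -> R) (kappa : R -> R) (Theta : set R) (v phi theta delta : R) :
  sigma_finite setT nu ->
  measurable_fun setT a ->
  0 < v -> 0 < phi ->
  (* Theta is the effective domain *)
  Theta = [set t | (\int[nu]_x (expR (x * t / (phi / v) + a x))%:E < +oo)%E] ->
  (* kappa is the cumulant function: the densities integrate to one on Theta *)
  (forall t, Theta t ->
     (\int[nu]_x (edf_density kappa v phi a t x)%:E)%E = 1%E) ->
  (* Assumption (A1) *)
  (interior Theta !=set0) ->
  (forall c : R, nu (~` [set c]) != 0%E) ->
  interior Theta theta ->
  0 < delta < 1 ->
  (* P(E[Y] >= l^delta(Y)) >= 1 - delta, with E[Y] = kappa'(theta) *)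
  ((1 - delta)%:E <=
     \int[nu]_(y in [set y | edf_lower nu kappa Theta v phi a delta y
                              <= (derive1 kappa theta)%:E])
        (edf_density kappa v phi a theta y)%:E)%E
  /\
  (* P(E[Y] <= u^delta(Y)) >= 1 - delta *)
  ((1 - delta)%:E <=
     \int[nu]_(y in [set y | (derive1 kappa theta)%:E
                              <= edf_upper nu kappa Theta v phi a delta y])
        (edf_density kappa v phi a theta y)%:E)%E.
Proof.
move=> _ measurable_a v_gt0 phi_gt0 Theta_def normed _ nu_not_point theta_int delta01.
by split; [exact: edf_lower_coverage | exact: edf_upper_coverage].
Qed.
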